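(* Let $c>0$, $n\ge 1$, and let $\mathbb{R}^n_c=\{\mathbf{v}\in\mathbb{R}^n:\|\mathbf{v}\|<c\}$ be equipped with Möbius addition $\oplus$, Möbius scalar multiplication $\otimes$ and Möbius coaddition $\boxplus$ (defined in the context). Let $A,B\in\mathbb{R}^n_c$ be distinct, and for $t\in\mathbb{R}$ let $$L_{AB}(t)=A\oplus\big((\ominus A\oplus B)\otimes t\big).$$ Then for all $t\in\mathbb{R}$, $$2\otimes L_{AB}(t)=A\boxplus L_{AB}(2t).$$
   Context: Möbius addition in the ball $\mathbb{R}^n_c$ is $$\mathbf{u}\oplus\mathbf{v}=\frac{\big(1+\frac{2}{c^2}\mathbf{u}\cdot\mathbf{v}+\frac{1}{c^2}\|\mathbf{v}\|^2\big)\mathbf{u}+\big(1-\frac{1}{c^2}\|\mathbf{u}\|^2\big)\mathbf{v}}{1+\frac{2}{c^2}\mathbf{u}\cdot\mathbf{v}+\frac{1}{c^4}\|\mathbf{u}\|^2\|\mathbf{v}\|^2},$$ with $\ominus\mathbf{v}=-\mathbf{v}$ and $\mathbf{u}\ominus\mathbf{v}=\mathbf{u}\oplus(-\mathbf{v})$. Scalar multiplication: for $r\in\mathbb{R}$ and $\mathbf{v}\neq\mathbf{0}$, $r\otimes\mathbf{v}=\mathbf{v}\otimes r=c\tanh\!\big(r\tanh^{-1}(\|\mathbf{v}\|/c)\big)\frac{\mathbf{v}}{\|\mathbf{v}\|}$, and $r\otimes\mathbf{0}=\mathbf{0}$. The gyration generated by $\mathbf{u},\mathbf{v}$ is the map $\mathrm{gyr}[\mathbf{u},\mathbf{v}]\mathbf{w}=\ominus(\mathbf{u}\oplus\mathbf{v})\oplus\big(\mathbf{u}\oplus(\mathbf{v}\oplus\mathbf{w})\big)$.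 Möbius coaddition is $\mathbf{a}\boxplus\mathbf{b}=\mathbf{a}\oplus\mathrm{gyr}[\mathbf{a},\ominus\mathbf{b}]\mathbf{b}$ for $\mathbf{a},\mathbf{b}\in\mathbb{R}^n_c$. *)

From mathcomp Require Import all_boot all_order all_algebra.
From mathcomp Require Import reals sequences exp.
Set Implicit Arguments. Unset Strict Implicit. Unset Printing Implicit Defensive.
Import Order.TTheory GRing.Theory Num.Theory.
Local Open Scope ring_scope.

Section Mobius.
Variables (R : realType) (n : nat) (c : R).

Definition dotv (u v : 'rV[R]_n) : R := \sum_(i < n) u 0 i * v 0 i.
Definition normv (v : 'rV[R]_n) : R := Num.sqrt (dotv v v).

Definition in_ball (v : 'rV[R]_n) : Prop := normv v < c.

Definition tanh (x : R) : R := (expR x - expR (- x)) / (expR x + expR (- x)).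
Definition artanh (y : R) : R := ln ((1 + y) / (1 - y)) / 2.

Definition madd (u v : 'rV[R]_n) : 'rV[R]_n :=
  (1 + 2 / c ^+ 2 * dotv u v + 1 / c ^+ 4 * normv u ^+ 2 * normv v ^+ 2)^-1 *:
  ((1 + 2 / c ^+ 2 * dotv u v + 1 / c ^+ 2 * normv v ^+ 2) *: u
   + (1 - 1 / c ^+ 2 * normv u ^+ 2) *: v).

Definition mopp (v : 'rV[R]_n) : 'rV[R]_n := - v.
Definition msub (u v : 'rV[R]_n) : 'rV[R]_n := madd u (mopp v).

Definition mscale (r : R) (v : 'rV[R]_n) : 'rV[R]_n :=
  if v == 0 then 0
  else (c * tanh (r * artanh (normv v / c)) / normv v) *: v.

Definition gyr (u v w : 'rV[R]_n) : 'rV[R]_n :=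
  madd (mopp (madd u v)) (madd u (madd v w)).

Definition mcoadd (a b : 'rV[R]_n) : 'rV[R]_n := madd a (gyr a (mopp b) b).

Definition gline (A B : 'rV[R]_n) (t : R) : 'rV[R]_n :=
  madd A (mscale t (madd (mopp A) B)).
End Mobius.

(* Everything happens in the plane spanned by A and w := ((-)A (+) B) (x) t.
   Since (2t) (x) u = 2 (x) (t (x) u) and 2 (x) x = 2 x / (1 + |x|^2/c^2), the claim
   reduces to the doubling law 2 (x) (A (+) w) = A [+] (A (+) 2 (x) w) for A, w in the
   ball.  Because gyr[A, (-)B] B = (-)(A (-) B) (+) A, the coaddition is
   A [+] B = ((1 - |B|^2/c^2) A + (1 - |A|^2/c^2) B) / (1 - |A|^2 |B|^2/c^4).  Every vector
   involved is then a combination of A and w whose coefficients are rational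
   functions of a = |A|^2/c^2, b = A.w/c^2, d = |w|^2/c^2, and both sides of the
   doubling law equal 2 ((1 + 2b + d) A + (1 - a) w) / ((1 + a)(1 + d) + 4b). *)

From mathcomp Require Import all_boot all_order all_algebra.
From mathcomp Require Import reals sequences exp.
From mathcomp Require Import ring lra.
Set Implicit Arguments. Unset Strict Implicit. Unset Printing Implicit Defensive.
Import Order.TTheory GRing.Theory Num.Theory.
Local Open Scope ring_scope.

Section InnerProduct.
Variables (R : realType) (n : nat).
Implicit Types (u v w : 'rV[R]_n).

Lemma dotvC u v : dotv u v = dotv v u.
Proof. by apply: eq_bigr => i _; rewrite mulrC. Qed.

Lemma dotvDl u v w : dotv (u + v) w = dotv u w + dotv v w.
Proof. by rewrite /dotv -big_split; apply: eq_bigr => i _; rewrite mxE mulrDl. Qed.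

Lemma dotvZl r u v : dotv (r *: u) v = r * dotv u v.
Proof. by rewrite /dotv mulr_sumr; apply: eq_bigr => i _; rewrite mxE mulrA. Qed.

Lemma dotvDr u v w : dotv u (v + w) = dotv u v + dotv u w.
Proof. by rewrite dotvC dotvDl !(dotvC u). Qed.

Lemma dotvZr r u v : dotv u (r *: v) = r * dotv u v.
Proof. by rewrite dotvC dotvZl dotvC. Qed.

Lemma dotvNl u v : dotv (- u) v = - dotv u v.
Proof. by rewrite -scaleN1r dotvZl mulN1r. Qed.

Lemma dotv0l v : dotv 0 v = 0.
Proof. by rewrite -(scale0r 0) dotvZl mul0r. Qed.

Lemma dotv_ge0 u : 0 <= dotv u u.
Proof. by apply: sumr_ge0 => i _; rewrite -expr2 sqr_ge0. Qed.

Lemma dotv_eq0 u : dotv u u = 0 -> u = 0.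
Proof.
move=> u0; apply/rowP => i; rewrite mxE.
have /(_ i isT) /eqP := psumr_eq0P (fun j _ => sqr_ge0 (u 0 j)) u0.
by rewrite mulf_eq0 orbb => /eqP.
Qed.

Lemma dotv_comb (P Q : 'rV[R]_n) x1 y1 x2 y2 :
  dotv (x1 *: P + y1 *: Q) (x2 *: P + y2 *: Q) =
  x1 * x2 * dotv P P + (x1 * y2 + y1 * x2) * dotv P Q + y1 * y2 * dotv Q Q.
Proof. by rewrite !dotvDl !dotvDr !dotvZl !dotvZr (dotvC Q P); ring. Qed.

Lemma dotv_CS u v : dotv u v ^+ 2 <= dotv u u * dotv v v.
Proof.
have [/dotv_eq0 ->|v_neq0] := eqVneq (dotv v v) 0.
  by rewrite dotvC dotv0l expr0n dotv0l mulr0.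
have v_gt0 : 0 < dotv v v by rewrite lt0r v_neq0 dotv_ge0.
have := dotv_ge0 (dotv v v *: u - dotv u v *: v).
rewrite -scaleN1r scalerA dotv_comb.
have -> : dotv v v * dotv v v * dotv u u +
    (dotv v v * (-1 * dotv u v) + -1 * dotv u v * dotv v v) * dotv u v +
    -1 * dotv u v * (-1 * dotv u v) * dotv v v =
    dotv v v * (dotv u u * dotv v v - dotv u v ^+ 2) by ring.
by rewrite pmulr_rge0 // subr_ge0.
Qed.

Lemma normv_sqr u : normv u ^+ 2 = dotv u u.
Proof. by rewrite sqr_sqrtr // dotv_ge0. Qed.

Lemma normv_gt0 u : u != 0 -> 0 < normv u.
Proof.
move=> u_neq0; rewrite sqrtr_gt0 lt0r dotv_ge0 andbT.
by apply: contra u_neq0 => /eqP /dotv_eq0 ->.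
Qed.

End InnerProduct.

Section MobiusPlane.
Variables (R : realType) (n : nat) (c : R).
Implicit Types (u v w x y : 'rV[R]_n).

Definition cdotv u v := dotv u v / c ^+ 2.

Lemma cdotv_ge0 u : 0 <= cdotv u u.
Proof. by rewrite divr_ge0 ?dotv_ge0 ?sqr_ge0. Qed.

Lemma cdotv_CS u v : cdotv u v ^+ 2 <= cdotv u u * cdotv v v.
Proof.
rewrite /cdotv expr_div_n mulf_div -expr2 ler_wpM2r ?dotv_CS //.
by rewrite invr_ge0 sqr_ge0.
Qed.

Lemma in_ballE u : 0 < c -> in_ball c u <-> cdotv u u < 1.
Proof.
move=> c_gt0; rewrite /in_ball /normv /cdotv.
rewrite -[X in _ < X]gtr0_norm // -sqrtr_sqr ltr_sqrt ?exprn_gt0 //.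
by rewrite ltr_pdivrMr ?exprn_gt0 // mul1r.
Qed.

Lemma madd_cdotv x y : madd c x y =
  (1 + 2 * cdotv x y + cdotv x x * cdotv y y)^-1 *:
  ((1 + 2 * cdotv x y + cdotv y y) *: x + (1 - cdotv x x) *: y).
Proof.
have c4 : 1 / c ^+ 4 = (c ^+ 2)^-1 * (c ^+ 2)^-1 by rewrite -invfM -exprD div1r.
rewrite /madd /cdotv !normv_sqr c4.
by congr (_^-1 *: (_ *: _ + _ *: _)); ring.
Qed.

Lemma madd_den_gt0 u v : 0 < c -> in_ball c u -> in_ball c v ->
  0 < 1 + 2 * cdotv u v + cdotv u u * cdotv v v.
Proof.
move=> c_gt0 /(in_ballE _ c_gt0) u1 /(in_ballE _ c_gt0) v1.
have := cdotv_CS u v; have := cdotv_ge0 u; have := cdotv_ge0 v.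
set b := cdotv u v; set p := cdotv u u * cdotv v v.
move=> v0 u0 bp; have p0 : 0 <= p by rewrite mulr_ge0.
have p1 : p < 1 by rewrite mulr_ilt1.
(* [b ^+ 2 <= p < 1] forces [|2 b| < 1 + p] since [4 p < (1 + p) ^+ 2] *)
nra.
Qed.

Lemma madd_Nl x : madd c (- x) x = 0.
Proof.
rewrite madd_cdotv /cdotv !dotvNl dotvC dotvNl opprK.
rewrite scalerN -scaleNr -scalerDl.
set k := (X in X *: x); have -> : k = 0 by rewrite /k; ring.
by rewrite scale0r scaler0.
Qed.

Lemma madd0r x : madd c x 0 = x.
Proof.
rewrite madd_cdotv /cdotv dotvC !dotv0l scaler0 addr0 !mul0r !mulr0 !addr0.
by rewrite invr1 !scale1r.
Qed.

Lemma mcoadd_gyr x y : mcoadd c x y = madd c x (madd c (- madd c x (- y)) x).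
Proof. by rewrite /mcoadd /gyr /mopp madd_Nl madd0r. Qed.

Section Plane.
Variables P Q : 'rV[R]_n.

Definition comb (s t : R) := s *: P + t *: Q.

Definition gram s1 t1 s2 t2 :=
  s1 * s2 * cdotv P P + (s1 * t2 + t1 * s2) * cdotv P Q + t1 * t2 * cdotv Q Q.

Definition plane_madd_den s1 t1 s2 t2 :=
  1 + 2 * gram s1 t1 s2 t2 + gram s1 t1 s1 t1 * gram s2 t2 s2 t2.

Definition plane_madd_num s1 t1 s2 t2 s t :=
  (1 + 2 * gram s1 t1 s2 t2 + gram s2 t2 s2 t2) * s + (1 - gram s1 t1 s1 t1) * t.

Lemma cdotv_comb s1 t1 s2 t2 :
  cdotv (comb s1 t1) (comb s2 t2) = gram s1 t1 s2 t2.
Proof. by rewrite /gram /cdotv dotv_comb; ring. Qed.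

Lemma comb10 : P = comb 1 0.
Proof. by rewrite /comb scale1r scale0r addr0. Qed.

Lemma comb01 : Q = comb 0 1.
Proof. by rewrite /comb scale1r scale0r add0r. Qed.

Lemma combN x s1 t1 : x = comb s1 t1 -> - x = comb (- s1) (- t1).
Proof. by move=> ->; rewrite /comb opprD !scaleNr. Qed.

Lemma combZ r x s1 t1 : x = comb s1 t1 -> r *: x = comb (r * s1) (r * t1).
Proof. by move=> ->; rewrite /comb scalerDr !scalerA. Qed.

Lemma comb_eq s1 t1 s2 t2 : s1 = s2 -> t1 = t2 -> comb s1 t1 = comb s2 t2.
Proof. by move=> -> ->. Qed.

Lemma madd_comb x y s1 t1 s2 t2 : x = comb s1 t1 -> y = comb s2 t2 ->
  madd c x y =
  comb (plane_madd_num s1 t1 s2 t2 s1 s2 / plane_madd_den s1 t1 s2 t2)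
       (plane_madd_num s1 t1 s2 t2 t1 t2 / plane_madd_den s1 t1 s2 t2).
Proof.
move=> -> ->; rewrite madd_cdotv !cdotv_comb /comb.
rewrite !scalerDr !scalerA addrACA -!scalerDl.
by congr (_ *: _ + _ *: _); rewrite /plane_madd_num /plane_madd_den; ring.
Qed.

End Plane.

Lemma comb_comb P Q s1 t1 s2 t2 :
  comb P (comb P Q s2 t2) s1 t1 = comb P Q (s1 + t1 * s2) (t1 * t2).
Proof. by rewrite /comb scalerDr !scalerA addrA -scalerDl. Qed.

End MobiusPlane.

Section Gyrovectors.
Variables (R : realType) (n : nat) (c : R).
Hypothesis c_gt0 : 0 < c.
Implicit Types (u v w : 'rV[R]_n).

Lemma madd_plane u v : madd c u v =
  comb u v ((1 + 2 * cdotv c u v + cdotv c v v) /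
            (1 + 2 * cdotv c u v + cdotv c u u * cdotv c v v))
           ((1 - cdotv c u u) /
            (1 + 2 * cdotv c u v + cdotv c u u * cdotv c v v)).
Proof.
rewrite (madd_comb c (comb10 u v) (comb01 u v)) /plane_madd_num /plane_madd_den /gram.
by apply: comb_eq; congr (_ / _); ring.
Qed.

Lemma cdotv_madd u v : in_ball c u -> in_ball c v ->
  1 - cdotv c (madd c u v) (madd c u v) =
  (1 - cdotv c u u) * (1 - cdotv c v v) /
  (1 + 2 * cdotv c u v + cdotv c u u * cdotv c v v).
Proof.
move=> uB vB; have /lt0r_neq0 D_neq0 := madd_den_gt0 c_gt0 uB vB.
by rewrite madd_plane cdotv_comb /gram; field.
Qed.

Lemma madd_in_ball u v : in_ball c u -> in_ball c v -> in_ball c (madd c u v).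
Proof.
move=> uB vB; have := cdotv_madd uB vB; have := madd_den_gt0 c_gt0 uB vB.
move: uB vB; rewrite !in_ballE // => u1 v1 D_gt0 gamma.
have : 0 < (1 - cdotv c u u) * (1 - cdotv c v v) /
           (1 + 2 * cdotv c u v + cdotv c u u * cdotv c v v).
  by rewrite divr_gt0 // mulr_gt0 // subr_gt0.
lra.
Qed.

Lemma cdotvZr r u v : cdotv c u (r *: v) = r * cdotv c u v.
Proof. by rewrite /cdotv dotvZr mulrA. Qed.

Lemma cdotvNr u v : cdotv c u (- v) = - cdotv c u v.
Proof. by rewrite -scaleN1r cdotvZr mulN1r. Qed.

Lemma cdotvN u v : cdotv c (- u) (- v) = cdotv c u v.
Proof. by rewrite cdotvNr /cdotv dotvNl mulNr opprK. Qed.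

Lemma in_ballN u : in_ball c u -> in_ball c (- u).
Proof. by rewrite !in_ballE // cdotvN. Qed.

Lemma mcoadd_comb (A B : 'rV[R]_n) : in_ball c A -> in_ball c B ->
  mcoadd c A B =
  comb A B ((1 - cdotv c B B) / (1 - cdotv c A A * cdotv c B B))
           ((1 - cdotv c A A) / (1 - cdotv c A A * cdotv c B B)).
Proof.
move=> AB BB; have := madd_den_gt0 c_gt0 AB (in_ballN BB).
move: (AB) (BB); rewrite !in_ballE // cdotvN cdotvNr.
have := cdotv_ge0 c A; have := cdotv_ge0 c B.
set a := cdotv c A A; set b := cdotv c A B; set d := cdotv c B B.
move=> d0 a0 a1 d1 E_gt0.
have E_neq0 : 1 - 2 * b + a * d != 0 by apply: lt0r_neq0; lra.
have a1_neq0 : 1 - a != 0 by apply: lt0r_neq0; lra.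
have ad1_neq0 : 1 - a * d != 0 by rewrite subr_eq0 eq_sym lt_eqF // mulr_ilt1.
have sub_comb : madd c A (- B) =
    comb A B ((1 - 2 * b + d) / (1 - 2 * b + a * d)) (- (1 - a) / (1 - 2 * b + a * d)).
  rewrite (madd_comb c (comb10 A B) (combN (comb01 A B))); apply: comb_eq;
  by rewrite /plane_madd_num /plane_madd_den /gram -/a -/b -/d; field.
have gyr_comb : madd c (- madd c A (- B)) A =
    comb A B (- 2 * d * (1 - b) / (1 - 2 * b + a * d)) ((1 - a * d) / (1 - 2 * b + a * d)).
  rewrite (madd_comb c (combN sub_comb) (comb10 A B)).
  have -> : plane_madd_den c A B (- ((1 - 2 * b + d) / (1 - 2 * b + a * d)))
      (- (- (1 - a) / (1 - 2 * b + a * d))) 1 0 = (1 - a) ^+ 2 / (1 - 2 * b + a * d).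
    by rewrite /plane_madd_den /gram -/a -/b -/d; field.
  rewrite /plane_madd_num /gram -/a -/b -/d.
  by apply: comb_eq; field; rewrite ?E_neq0 ?a1_neq0 ?ad1_neq0.
rewrite mcoadd_gyr gyr_comb (madd_comb c (comb10 A B) (erefl (comb A B _ _))).
have -> : plane_madd_den c A B 1 0 (- 2 * d * (1 - b) / (1 - 2 * b + a * d))
    ((1 - a * d) / (1 - 2 * b + a * d)) = (1 - a * d) ^+ 2 / (1 - 2 * b + a * d).
  by rewrite /plane_madd_den /gram -/a -/b -/d; field.
rewrite /plane_madd_num /gram -/a -/b -/d.
by apply: comb_eq; field; rewrite ?E_neq0 ?a1_neq0 ?ad1_neq0.
Qed.

End Gyrovectors.

Section Tanh.
Variable R : realType.
Implicit Types x : R.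

Lemma tanh_double x : tanh (2 * x) = 2 * tanh x / (1 + tanh x ^+ 2).
Proof.
have ex_gt0 := expR_gt0 x; have ex_neq0 := lt0r_neq0 ex_gt0.
rewrite /tanh -[2 * x]/(2%:R * x) mulr_natl mulr2n opprD !expRD !expRN.
by field; rewrite ex_neq0 !gt_eqF //; nra.
Qed.

Lemma tanh_sqr_lt1 x : tanh x ^+ 2 < 1.
Proof.
have ex_gt0 := expR_gt0 x; have exV_gt0 : 0 < (expR x)^-1 by rewrite invr_gt0.
rewrite /tanh expRN expr_div_n ltr_pdivrMr ?exprn_gt0 ?addr_gt0 //.
by rewrite mul1r !expr2; nra.
Qed.

Lemma tanh_ln x : 0 < x -> tanh (ln x) = (x - x^-1) / (x + x^-1).
Proof. by move=> x_gt0; rewrite /tanh expRN lnK. Qed.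

Lemma tanh_double_artanh (c s : R) : 0 < s -> s < c ->
  c * tanh (2 * artanh (s / c)) / s = 2 / (1 + s ^+ 2 / c ^+ 2).
Proof.
move=> s_gt0 sc; have c_gt0 : 0 < c by apply: lt_trans sc.
have u_gt0 : 0 < s / c by rewrite divr_gt0.
have u_lt1 : s / c < 1 by rewrite ltr_pdivrMr // mul1r.
rewrite /artanh [2 * _]mulrC divfK ?pnatr_eq0 // tanh_ln ?divr_gt0 ?subr_gt0 ?addr_gt0 //.
by field; rewrite !gt_eqF ?subr_gt0 ?addr_gt0 //; nra.
Qed.

End Tanh.

Section Scaling.
Variables (R : realType) (n : nat) (c : R).
Hypothesis c_gt0 : 0 < c.
Implicit Types (v x : 'rV[R]_n).

Lemma cdotv_mscale t v : v != 0 ->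
  cdotv c (mscale c t v) (mscale c t v) = tanh (t * artanh (normv v / c)) ^+ 2.
Proof.
move=> v_neq0; have /lt0r_neq0 nv_neq0 := normv_gt0 v_neq0.
rewrite /mscale (negbTE v_neq0) /cdotv dotvZl dotvZr -normv_sqr.
by field; rewrite nv_neq0 gt_eqF.
Qed.

Lemma mscale_in_ball t v : in_ball c (mscale c t v).
Proof.
apply/in_ballE => //; have [->|v_neq0] := eqVneq v 0.
  by rewrite /mscale eqxx /cdotv dotv0l mul0r ltr01.
by rewrite cdotv_mscale // tanh_sqr_lt1.
Qed.

Lemma mscale2E x : in_ball c x -> mscale c 2 x = (2 / (1 + cdotv c x x)) *: x.
Proof.
move=> xB; rewrite /mscale; case: eqP => [->|/eqP x_neq0]; first by rewrite scaler0.
by rewrite tanh_double_artanh ?normv_gt0 ?normv_sqr.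
Qed.

Lemma mscale_double t v : mscale c (2 * t) v = mscale c 2 (mscale c t v).
Proof.
have [->|v_neq0] := eqVneq v 0; first by rewrite /mscale !eqxx.
rewrite (mscale2E (mscale_in_ball t v)) cdotv_mscale //.
have := tanh_sqr_lt1 (t * artanh (normv v / c)); have /lt0r_neq0 := normv_gt0 v_neq0.
rewrite /mscale (negbTE v_neq0) -(mulrA 2 t) tanh_double scalerA.
set T := tanh _ => nv_neq0 T1; congr (_ *: _); field.
by rewrite nv_neq0 gt_eqF //; have := sqr_ge0 T; lra.
Qed.

End Scaling.

Section Doubling.
Variables (R : realType) (n : nat) (c : R).
Hypothesis c_gt0 : 0 < c.
Variables A v : 'rV[R]_n.
Hypotheses (AB : in_ball c A) (vB : in_ball c v).

Let a := cdotv c A A.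
Let b := cdotv c A v.
Let d := cdotv c v v.

Lemma coadd_den_gt0 : 0 < 1 + 2 * b + a.
Proof.
have D_gt0 : 0 < 1 + 2 * b + a * d := madd_den_gt0 c_gt0 AB vB.
have := cdotv_ge0 c A; move: vB; rewrite in_ballE // -/a -/d => d1 a0.
have : 0 <= a * (1 - d) by rewrite mulr_ge0 // subr_ge0 ltW.
nra.
Qed.

Lemma mcoadd_madd :
  mcoadd c A (madd c A v) = comb A v ((2 + 2 * b) / (1 + 2 * b + a)) ((1 - a) / (1 + 2 * b + a)).
Proof.
have D_gt0 : 0 < 1 + 2 * b + a * d := madd_den_gt0 c_gt0 AB vB.
move: (AB); rewrite in_ballE // -/a => a1.
have a1_neq0 : 1 - a != 0 by rewrite subr_eq0 eq_sym lt_eqF.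
have E_gt0 := coadd_den_gt0.
have := cdotv_madd c_gt0 AB vB; rewrite mcoadd_comb //; last exact: madd_in_ball.
rewrite [X in comb A X]madd_plane comb_comb -/a -/b -/d.
set m := cdotv c _ _ => gamma.
have -> : m = 1 - (1 - a) * (1 - d) / (1 + 2 * b + a * d) by lra.
have /lt0r_neq0 D_neq0 := D_gt0; have /lt0r_neq0 E_neq0 := E_gt0.
have -> : 1 - a * (1 - (1 - a) * (1 - d) / (1 + 2 * b + a * d)) =
          (1 - a) * (1 + 2 * b + a) / (1 + 2 * b + a * d) by field.
by apply: comb_eq; field; rewrite D_neq0 E_neq0 a1_neq0.
Qed.

Lemma mscale2_madd_comb :
  mscale c 2 (madd c A v) =
  comb A v (2 * (1 + 2 * b + d) / ((1 + a) * (1 + d) + 4 * b))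
           (2 * (1 - a) / ((1 + a) * (1 + d) + 4 * b)).
Proof.
have D_gt0 : 0 < 1 + 2 * b + a * d := madd_den_gt0 c_gt0 AB vB.
have := cdotv_madd c_gt0 AB vB; have := cdotv_ge0 c (madd c A v).
rewrite (mscale2E (madd_in_ball c_gt0 AB vB)) -/a -/b -/d.
set m := cdotv c _ _ => m0 gamma.
have /lt0r_neq0 D_neq0 := D_gt0.
have m_eq : m = 1 - (1 - a) * (1 - d) / (1 + 2 * b + a * d) by lra.
have F_eq : (1 + a) * (1 + d) + 4 * b = (1 + 2 * b + a * d) * (1 + m).
  by rewrite m_eq; field.
have /lt0r_neq0 F_neq0 : 0 < (1 + a) * (1 + d) + 4 * b.
  by rewrite F_eq mulr_gt0 //; lra.
rewrite madd_plane -/a -/b -/d (combZ _ (erefl (comb A v _ _))) F_eq.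
have /lt0r_neq0 m1_neq0 : 0 < 1 + m by lra.
by apply: comb_eq; field; rewrite m1_neq0 D_neq0.
Qed.

End Doubling.

Lemma mscale2_madd (R : realType) (n : nat) (c : R) (A v : 'rV[R]_n) :
  0 < c -> in_ball c A -> in_ball c v ->
  mscale c 2 (madd c A v) = mcoadd c A (madd c A (mscale c 2 v)).
Proof.
move=> c_gt0 AB vB; have vB2 := mscale_in_ball c_gt0 2 v.
rewrite mscale2_madd_comb // mcoadd_madd //.
have := coadd_den_gt0 c_gt0 AB vB2; have := cdotv_ge0 c v.
rewrite mscale2E // cdotvZr (combZ _ (comb01 A v)) comb_comb.
set a := cdotv c A A; set b := cdotv c A v; set d := cdotv c v v => d0 E_gt0.
have d1_gt0 : 0 < 1 + d by lra.
have /lt0r_neq0 F_neq0 : 0 < 1 + d + 2 * (2 * b) + a * (1 + d).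
  rewrite (_ : _ + _ = (1 + d) * (1 + 2 * (2 / (1 + d) * b) + a)) ?mulr_gt0 //.
  by field; rewrite lt0r_neq0.
by apply: comb_eq; field; rewrite lt0r_neq0.
Qed.

Theorem theorem1 (R : realType) (n : nat) (c : R) (A B : 'rV[R]_n) :
  0 < c -> (1 <= n)%N ->
  in_ball c A -> in_ball c B -> A != B ->
  forall t : R,
    mscale c 2 (gline c A B t) = mcoadd c A (gline c A B (2 * t)).
Proof.
move=> c_gt0 _ AB _ _ t.
by rewrite /gline mscale_double // mscale2_madd //; apply: mscale_in_ball.
Qed.
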